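(* For $M\geq1$ let $T_M$ denote the number of pairs $((d_1,\ldots,d_M),\tau)$ where $(d_1,\ldots,d_M)$ is an integer sequence with $d_j\in\{1,-1,-2,-3,\ldots\}$ for all $j$, $\sum_{j=1}^k d_j\geq1$ for all $1\leq k\leq M$, and $\sum_{j=1}^M d_j=1$, and $\tau$ is a function assigning to each index $j$ with $d_j\leq -2$ a value $\tau(j)\in\{1,2,3,4\}$ (and is undefined on the other indices). Then $T_M=o(4^M)$ as $M\to\infty$. *)

From HB Require Import structures.
From mathcomp Require Import all_boot all_order all_algebra.
Set Implicit Arguments. Unset Strict Implicit. Unset Printing Implicit Defensive.
Import Order.TTheory GRing.Theory Num.Theory.
Local Open Scope ring_scope.

Definition step_ok (x : int) : bool := (x == 1) || (x <= -1).

Definition valid_seq (M : nat) (d : seq int) : bool :=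
  [&& size d == M,
      all step_ok d,
      [forall k : 'I_M.+1, (1 <= k)%N ==> (1 <= \sum_(x <- take k d) x)]
    & \sum_(x <- d) x == 1].

(* tau is encoded as a finite function 'I_M -> option 'I_4 (index j : 'I_M
   stands for j+1; value Some t stands for t+1 in {1,2,3,4}); it is defined
   (Some _) exactly at the indices j with d_j <= -2 and undefined (None)
   elsewhere. *)
Definition valid_pair (M : nat) (p : seq int * {ffun 'I_M -> option 'I_4}) : bool :=
  valid_seq M p.1 &&
  [forall j : 'I_M, (p.2 j != None) == (nth 0 p.1 j <= -2)].

Definition pairs (M : nat) := {p : seq int * {ffun 'I_M -> option 'I_4} | valid_pair p}.

Definition has_card (A : Type) (n : nat) : Prop :=
  exists f : 'I_n -> A, bijective f.

From HB Require Import structures.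
From mathcomp Require Import all_boot all_order all_algebra zify.
Import Order.TTheory GRing.Theory Num.Theory.
Set Implicit Arguments. Unset Strict Implicit.
Local Open Scope ring_scope.

(* Forget the prefix condition: a pair is then a word of length M over the
   letters +1, -1 and (-k, t) with k >= 2, t in {1,...,4}, whose letters sum
   to 1, and distinct pairs give distinct words. For any w > 0 the number of
   words of length M with letter sum s is at most w^s (sum_e w^(-val e))^M,
   because each such word contributes w^(-s) to the expansion of the power.
   With w = 2/5 the letter weight sum is at most
   5/2 + 2/5 + 4 sum_{k>=2} (2/5)^k = 119/30 < 4, so T_M <= (119/30)^M. *)

Lemma bernoulli_le (R : realDomainType) (a : R) (n : nat) :
  0 <= a -> 1 + a *+ n <= (1 + a) ^+ n.
Proof.
move=> a_ge0; elim: n => [|n IHn]; first by rewrite mulr0n addr0 expr0.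
have a1_ge0 : 0 <= 1 + a by rewrite addr_ge0.
rewrite exprS; apply: le_trans _ (ler_wpM2l a1_ge0 IHn); rewrite mulrS.
rewrite mulrDl mul1r mulrDr mulr1 addrA addrAC lerD2l lerDl.
by rewrite mulr_ge0 // mulrn_wge0.
Qed.

Lemma exprn_unbounded (R : archiRealFieldType) (q K : R) :
  1 < q -> exists N, forall M, (N <= M)%N -> K <= q ^+ M.
Proof.
rewrite -subr_gt0 => a_gt0; set a := q - 1 in a_gt0.
have Ka_ge0 : 0 <= `|K| / a by rewrite divr_ge0 // ltW.
exists (Num.Def.archi_bound (`|K| / a)) => M le_NM.
have /ltW := archi_boundP Ka_ge0; rewrite ler_pdivrMr // => le_Ka.
apply: le_trans (ler_norm K) _; apply: le_trans le_Ka _.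
rewrite -[q](subrK 1) addrC; apply: le_trans (bernoulli_le _ (ltW a_gt0)).
by rewrite ler_wpDl // mulr_natl ler_wpMn2l ?ltW.
Qed.

Lemma card_sum_eq_le (R : realFieldType) (S : finType) (v : S -> int)
    (w : R) (s : int) (M : nat) :
  0 < w ->
  (#|[pred F : {ffun 'I_M -> S} | \sum_j v (F j) == s]|)%:R
    <= w ^ s * (\sum_e w ^ (- v e)) ^+ M.
Proof.
move=> w_gt0; have w_neq0 : w != 0 by rewrite gt_eqF.
have prod_weight (F : {ffun 'I_M -> S}) :
    \prod_j w ^ (- v (F j)) = w ^ (- \sum_j v (F j)).
  rewrite (big_morph (fun z : int => w ^ (- z)) (id1 := 1) (op1 := *%R)) //.
  by move=> x y; rewrite opprD expfzDr.
have -> : (\sum_e w ^ (- v e)) ^+ M = \prod_(j < M) \sum_e w ^ (- v e).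
  by rewrite prodr_const card_ord.
rewrite bigA_distr_bigA mulr_sumr.
rewrite -sum1_card natr_sum big_mkcond /=; apply: ler_sum => F _.
rewrite inE prod_weight; case: eqP => [->|_].
  by rewrite -expfzDr // subrr expr0z.
by rewrite mulr_ge0 // exprz_ge0 // ltW.
Qed.

Lemma geometric_sum_le (R : realFieldType) (w : R) (n : nat) :
  0 <= w < 1 -> \sum_(i < n) w ^+ i <= (1 - w)^-1.
Proof.
case/andP=> w_ge0 w_lt1; have w1_gt0 : 0 < 1 - w by rewrite subr_gt0.
have sum_eq : (1 - w) * \sum_(i < n) w ^+ i = 1 - w ^+ n.
  by rewrite -opprB mulNr -subrX1 opprB.
rewrite -(ler_pM2l w1_gt0) sum_eq mulfV ?gt_eqF //.
by rewrite gerBl exprn_ge0.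
Qed.

Lemma sum_step_ok_le_size (s : seq int) :
  all step_ok s -> \sum_(x <- s) x <= (size s)%:Z.
Proof.
elim: s => [|x s IHs] /=; first by rewrite big_nil.
case/andP=> x_ok s_ok; rewrite big_cons -add1n PoszD lerD ?IHs //.
by case/orP: x_ok => [/eqP -> //|]; lia.
Qed.

Lemma valid_seq_nth_ge M d (j : nat) :
  valid_seq M d -> (j < M)%N -> 1 - j%:Z <= nth 0 d j.
Proof.
case/and4P=> /eqP size_d d_ok /forallP prefix_ge1 _ lt_jM.
have := prefix_ge1 (Ordinal (lt_jM : (j.+1 < M.+1)%N)); rewrite /=.
rewrite (take_nth 0) ?size_d // -cats1 big_cat big_seq1 => sum_ge1.
have prefix_le : \sum_(x <- take j d) x <= j%:Z.
  apply: le_trans (sum_step_ok_le_size _) _.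
    by move: d_ok; rewrite -{1}(cat_take_drop j d) all_cat => /andP[].
  by rewrite lez_nat size_take_min geq_minl.
by rewrite lerBlDr (le_trans sum_ge1) // [_ + j%:Z]addrC lerD2r.
Qed.

(* [inl (i, t)] is the step [-(i + 2)] carrying the label [t]; [inr true] and
   [inr false] are the steps [+1] and [-1]. *)
Definition step_letter (n : nat) : finType := ('I_n * 'I_4 + bool)%type.

Definition letter_val n (e : step_letter n) : int :=
  match e with inl (i, _) => - (i%:Z + 2) | inr b => if b then 1 else -1 end.

Definition letter_label n (e : step_letter n) : option 'I_4 :=
  if e is inl (_, t) then Some t else None.

Definition encode_step n (x : int) (o : option 'I_4) : step_letter n.+1 :=
  if o is Some t then inl (inord (absz x - 2), t) else inr (x == 1).

Lemma letter_label_encode n x o : letter_label (encode_step n x o) = o.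
Proof. by case: o. Qed.

Lemma letter_val_encode n x o :
  step_ok x -> - (n%:Z) <= x -> (o != None) = (x <= -2) ->
  letter_val (encode_step n x o) = x.
Proof.
case: o => [t|] /= x_ok x_ge lbl.
  by rewrite inordK; lia.
case/orP: x_ok => [/eqP -> //|x_neg] /=; rewrite ifN; lia.
Qed.

Definition encode_pair M (p : seq int * {ffun 'I_M -> option 'I_4}) :
    {ffun 'I_M -> step_letter M.+1} :=
  [ffun j : 'I_M => encode_step M (nth 0 p.1 j) (p.2 j)].

Lemma letter_val_encode_pair M p (j : 'I_M) :
  valid_pair p -> letter_val (encode_pair p j) = nth 0 p.1 j.
Proof.
case/andP=> p_ok /forallP /(_ j) /eqP lbl; rewrite ffunE letter_val_encode //.
  have /and4P[/eqP size_p all_ok _ _] := p_ok.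
  by apply: (allP all_ok); rewrite mem_nth ?size_p.
apply: le_trans (valid_seq_nth_ge p_ok (ltn_ord j)).
have := ltn_ord j; lia.
Qed.

Lemma encode_pair_inj M : {in @valid_pair M &, injective (@encode_pair M)}.
Proof.
move=> [d tau] [d' tau'] p_ok p'_ok enc_eq; congr pair.
  have /andP[/and4P[/eqP size_d _ _ _] _] := p_ok.
  have /andP[/and4P[/eqP size_d' _ _ _] _] := p'_ok.
  apply: (@eq_from_nth _ 0); first by rewrite size_d size_d'.
  move=> j; rewrite size_d => lt_jM.
  have := congr1 (fun F : {ffun 'I_M -> step_letter M.+1} =>
    letter_val (F (Ordinal lt_jM))) enc_eq.
  by rewrite !letter_val_encode_pair.
apply/ffunP=> j.
have := congr1 (fun F : {ffun 'I_M -> step_letter M.+1} => letter_label (F j)) enc_eq.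
by rewrite !ffunE !letter_label_encode.
Qed.

Lemma sum_letter_val_encode_pair M p :
  valid_pair p -> \sum_(j < M) letter_val (encode_pair p j) = 1.
Proof.
move=> p_ok; have /andP[/and4P[/eqP size_d _ _ /eqP sum_d] _] := p_ok.
under eq_bigr => j _ do rewrite letter_val_encode_pair //.
by rewrite -sum_d (big_nth 0) size_d big_mkord.
Qed.

Lemma has_card_pairs_le M T :
  has_card (pairs M) T ->
  (T <= #|[pred F : {ffun 'I_M -> step_letter M.+1} |
             (\sum_j letter_val (F j) == 1)%R]|)%N.
Proof.
case=> f f_bij.
pose g (i : 'I_T) :
    {F : {ffun 'I_M -> step_letter M.+1} | (\sum_j letter_val (F j) == 1)%R} :=
  exist _ (encode_pair (sval (f i)))
    (introT eqP (sum_letter_val_encode_pair (svalP (f i)))).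
have g_inj : injective g.
  move=> i i' /(congr1 sval) /= enc_eq; apply: (bij_inj f_bij); apply: val_inj.
  exact: encode_pair_inj (svalP (f i)) (svalP (f i')) enc_eq.
by have := leq_card g g_inj; rewrite card_ord card_sig.
Qed.

Lemma letter_weight_sum_le n :
  \sum_(e : step_letter n) (2 / 5 : rat) ^ (- letter_val e) <= 119 / 30.
Proof.
rewrite big_sumType big_bool /=.
have -> :
    \sum_(p : 'I_n * 'I_4) (2 / 5 : rat) ^ (- letter_val (inl p : step_letter n)) =
      (2 / 5 * (2 / 5) * \sum_(i < n) (2 / 5) ^+ i) *+ 4.
  transitivity (\sum_(i < n) \sum_(t < 4) (2 / 5 : rat) ^+ i.+2).
    rewrite pair_bigA; apply: eq_bigr => -[i t] _ /=.
    by rewrite opprK -[_ + 2]/(Posz (i + 2)) addn2.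
  rewrite -mulrnAr -sumrMnl mulr_sumr; apply: eq_bigr => i _.
  by rewrite sumr_const card_ord mulrnAr !exprS mulrA.
apply: le_trans
  (_ : (2 / 5 * (2 / 5) * (1 - 2 / 5)^-1) *+ 4 + (5 / 2 + 2 / 5) <= _).
  rewrite lerD2r lerMn2r /=; apply: ler_wpM2l; first by vm_compute.
  by apply: geometric_sum_le; vm_compute.
by vm_compute.
Qed.

Lemma card_pairs_le M T :
  has_card (pairs M) T -> (T%:R : rat) <= (119 / 30) ^+ M.
Proof.
move=> card_T; have w_gt0 : 0 < 2 / 5 :> rat by vm_compute.
have weight_ge0 : 0 <= \sum_e (2 / 5 : rat) ^ (- @letter_val M.+1 e).
  by apply: sumr_ge0 => e _; rewrite exprz_ge0 // ltW.
have c_ge0 : 0 <= 119 / 30 :> rat by vm_compute.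
apply: le_trans (_ : 2 / 5 * (119 / 30) ^+ M <= _); last first.
  by apply: ler_piMl; [exact: exprn_ge0 | vm_compute].
have := card_sum_eq_le (@letter_val M.+1) 1 M w_gt0; rewrite expr1z => count_le.
apply: le_trans (le_trans _ count_le) _; first by rewrite ler_nat has_card_pairs_le.
apply: ler_wpM2l; first exact: ltW.
by apply: lerXn2r; rewrite ?nnegrE ?letter_weight_sum_le ?weight_ge0 ?c_ge0.
Qed.

Theorem mainTheorem7 (T : nat -> nat)
  (hT : forall M : nat, (1 <= M)%N -> has_card (pairs M) (T M)) :
  forall eps : rat, 0 < eps ->
    exists N : nat, forall M : nat, (N <= M)%N ->
      (T M)%:R <= eps * 4%:R ^+ M.
Proof.
move=> eps eps_gt0; set c : rat := 119 / 30.
have q_gt1 : 1 < 4 / c by vm_compute.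
have [N ratio_large] := exprn_unbounded eps^-1 q_gt1.
exists N.+1 => M lt_NM.
have T_le := card_pairs_le (hT M (leq_trans (ltn0Sn N) lt_NM)).
apply: le_trans T_le _.
have -> : (4 : rat) ^+ M = c ^+ M * (4 / c) ^+ M.
  by rewrite -exprMn [c * _]mulrC divfK //; vm_compute.
rewrite mulrCA; apply: ler_peMr; first by apply: exprn_ge0; vm_compute.
apply: le_trans (ler_wpM2l (ltW eps_gt0) (ratio_large M (ltnW lt_NM))).
by rewrite mulfV ?lt0r_neq0.
Qed.
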